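(* There exist constants $\delta_1>0$ and $D_3<\infty$ such that for all $u\in\mathbb U$ and all $t\ge0$, $$\|x(t,u)-\pi\|_2\le D_3e^{-\delta_1t}\|u-\pi\|_2 .$$
   Context: Fix integers $C\ge1$, $d\ge1$ and a real $\sigma>0$. Let $\mathbb U=\{u\in\mathbb R^{C+1}:1=u_0\ge u_1\ge\cdots\ge u_C\ge0\}$ with Euclidean norm $\|\cdot\|_2$. For $u\in\mathbb U$, $x(t,u)$ is the unique solution of $x(0,u)=u$, $\frac d{dt}x_0=0$, $\frac{d}{dt}x_n=\sigma(x_{n-1}^d-x_n^d)-n(x_n-x_{n+1})$ for $1\le n\le C$, with $x_{C+1}\equiv0$. $\pi\in\mathbb U$ is the unique fixed point of this ODE in $\mathbb U$: $\pi_0=1$ and $\sigma(\pi_{n-1}^d-\pi_n^d)=n(\pi_n-\pi_{n+1})$ for $1\le n\le C$, with $\pi_{C+1}=0$. *)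

From Stdlib Require Import Reals Lra Lia.
From Coquelicot Require Import Coquelicot.
Open Scope R_scope.

(* Vectors in R^{C+1} are represented as functions nat -> R; only the
   coordinates 0..C are meaningful. *)

Definition inU (C : nat) (u : nat -> R) : Prop :=
  u 0%nat = 1 /\
  (forall n : nat, (n < C)%nat -> u (S n) <= u n) /\
  0 <= u C.

Definition ext (C : nat) (v : nat -> R) (n : nat) : R :=
  if Nat.leb n C then v n else 0.

Definition rhs (C d : nat) (sigma : R) (v : nat -> R) (n : nat) : R :=
  sigma * (ext C v (n - 1) ^ d - ext C v n ^ d)
  - INR n * (ext C v n - ext C v (S n)).

Definition is_solution (C d : nat) (sigma : R) (u : nat -> R)
  (x : R -> nat -> R) : Prop :=
  (forall n : nat, (n <= C)%nat -> x 0 n = u n) /\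
  (forall n : nat, (n <= C)%nat ->
     filterlim (fun s => x s n) (at_right 0) (locally (u n))) /\
  (forall t : R, 0 < t -> is_derive (fun s => x s 0%nat) t 0) /\
  (forall t : R, 0 < t -> forall n : nat, (1 <= n <= C)%nat ->
     is_derive (fun s => x s n) t (rhs C d sigma (x t) n)).

Definition is_fixed_point (C d : nat) (sigma : R) (p : nat -> R) : Prop :=
  p 0%nat = 1 /\
  (forall n : nat, (1 <= n <= C)%nat -> rhs C d sigma p n = 0).

Definition dist2 (C : nat) (v w : nat -> R) : R :=
  sqrt (sum_f_R0 (fun n => (v n - w n) ^ 2) C).

From Stdlib Require Import Reals Lra Lia Classical.
From Coquelicot Require Import Coquelicot.
Open Scope R_scope.

(* The proof shows that the l1 distance gap(t) = sum_n |x_n(t) - pi_n| is a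
   Lyapunov function: its upper right Dini derivative satisfies
   D+ gap <= - gap.  Differentiating |x_n - pi_n| and using the fixed-point
   equations, the contributions of consecutive coordinates telescope; this
   needs x_0 = 1 along the flow and x_n >= 0, the latter because then
   x_n^d - pi_n^d has the sign of x_n - pi_n.  Nonnegativity is obtained from
   the negative mass sum_n (|x_n| - x_n), which is 0 at time 0 and satisfies
   a local Gronwall inequality, hence stays 0 by a continuation argument.

   The theorem follows from
   gap(t) <= e^{-t} gap(0) and the comparison of the l1 and l2 norms. *)

Lemma continuous_eps (g : R -> R) (c : R) : continuous g c ->
  forall eps, 0 < eps -> exists del, 0 < del /\
    forall y, Rabs (y - c) < del -> Rabs (g y - g c) < eps.
Proof.
  intros Hg eps Heps.
  apply continuity_pt_filterlim in Hg.
  destruct (Hg eps Heps) as [del [Hdel Hnear]].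
  exists del; split; [exact Hdel|]. intros y Hy.
  destruct (Req_dec c y) as [<-|Hne].
  - unfold Rminus; rewrite Rplus_opp_r, Rabs_R0; exact Heps.
  - apply Hnear. split; [split; [exact I|exact Hne]|exact Hy].
Qed.

Lemma right_limit_eps (g : R -> R) (a l : R) :
  filterlim g (at_right a) (locally l) ->
  forall eps, 0 < eps -> exists del, 0 < del /\
    forall y, a < y < a + del -> Rabs (g y - l) < eps.
Proof.
  intros Hg eps Heps.
  destruct (Hg (ball l (mkposreal eps Heps)) (locally_ball _ _)) as [del Hdel].
  exists (pos del); split; [apply cond_pos|]. intros y Hy.
  apply (Hdel y); [|lra].
  change (Rabs (y - a) < del). rewrite Rabs_right; lra.
Qed.

Lemma continuous_le_from_left (g : R -> R) (c r K : R) : 0 < r ->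
  continuous g c -> (forall y, c - r < y < c -> g y <= K) -> g c <= K.
Proof.
  intros Hr Hg Hleft.
  destruct (Rle_dec (g c) K) as [ok|Hgt]; [exact ok|exfalso].
  destruct (continuous_eps g c Hg (g c - K) ltac:(lra)) as [del [Hdel Hnear]].
  set (y := c - Rmin del r / 2).
  assert (Hmin : 0 < Rmin del r) by (apply Rmin_glb_lt; lra).
  assert (Hy : c - r < y < c) by (unfold y; pose proof (Rmin_r del r); lra).
  assert (Hdist : Rabs (y - c) < del)
    by (unfold y; rewrite Rabs_left; pose proof (Rmin_l del r); lra).
  specialize (Hnear y Hdist). apply Rabs_def2 in Hnear.
  specialize (Hleft y Hy). lra.
Qed.

Lemma continuation (a : R) (P : R -> Prop) :
  P a ->
  (forall c, a < c -> (forall s, a <= s < c -> P s) -> P c) ->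
  (forall c, a <= c -> P c -> exists eta, 0 < eta /\
     forall s, c < s < c + eta -> P s) ->
  forall s, a <= s -> P s.
Proof.
  intros Ha Hclosed Hext s0 Hs0.
  destruct (classic (P s0)) as [ok|Hnot]; [exact ok|exfalso].
  set (G := fun tau => a <= tau /\ forall s, a <= s <= tau -> P s).
  assert (HGa : G a).
  { split; [lra|]. intros s Hs. replace s with a by lra. exact Ha. }
  assert (Hbound : bound G).
  { exists s0. intros tau [Hat Hall].
    destruct (Rle_dec tau s0) as [ok|Hgt]; [exact ok|].
    exfalso; apply Hnot, Hall; lra. }
  destruct (completeness G Hbound (ex_intro _ a HGa)) as [c [Hub Hlub]].
  assert (Hac : a <= c) by (apply Hub, HGa).
  assert (Hbelow : forall s, a <= s < c -> P s).
  { intros s Hs.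
    destruct (classic (exists tau, G tau /\ s < tau)) as [[tau [[_ Hall] Hst]]|Hno].
    - apply Hall; lra.
    - assert (c <= s); [|lra].
      apply Hlub. intros tau Htau.
      destruct (Rle_dec tau s) as [ok|Hgt]; [exact ok|].
      exfalso; apply Hno; exists tau; split; [exact Htau|lra]. }
  assert (Hc : P c).
  { destruct Hac as [Hlt| <-]; [apply Hclosed; assumption|exact Ha]. }
  destruct (Hext c Hac Hc) as [eta [Heta Hnear]].
  assert (HG : G (c + eta / 2)).
  { split; [lra|]. intros s Hs.
    destruct (Rtotal_order s c) as [Hlt|[->|Hgt]];
      [apply Hbelow; lra|exact Hc|apply Hnear; lra]. }
  specialize (Hub _ HG). lra.
Qed.

(* [dini_le f t m]: the upper right Dini derivative of f at t is at most m. *)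
Definition dini_le (f : R -> R) (t m : R) : Prop :=
  forall eps, 0 < eps -> exists del, 0 < del /\
    forall h, 0 < h < del -> f (t + h) <= f t + h * m + eps * h.

Lemma dini_le_weaken (f : R -> R) (t m m' : R) :
  dini_le f t m -> m <= m' -> dini_le f t m'.
Proof.
  intros Hf Hm eps Heps. destruct (Hf eps Heps) as [del [Hdel Hnear]].
  exists del; split; [exact Hdel|]. intros h Hh. specialize (Hnear h Hh). nra.
Qed.

Lemma dini_le_plus (f g : R -> R) (t m1 m2 : R) :
  dini_le f t m1 -> dini_le g t m2 -> dini_le (fun s => f s + g s) t (m1 + m2).
Proof.
  intros Hf Hg eps Heps.
  destruct (Hf (eps / 2) ltac:(lra)) as [d1 [Hd1 H1]].
  destruct (Hg (eps / 2) ltac:(lra)) as [d2 [Hd2 H2]].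
  exists (Rmin d1 d2); split; [apply Rmin_glb_lt; lra|].
  intros h Hh. pose proof (Rmin_l d1 d2); pose proof (Rmin_r d1 d2).
  specialize (H1 h ltac:(lra)); specialize (H2 h ltac:(lra)). nra.
Qed.

Lemma dini_le_sum (F : nat -> R -> R) (m : nat -> R) (t : R) (N : nat) :
  (forall n, (n <= N)%nat -> dini_le (F n) t (m n)) ->
  dini_le (fun s => sum_f_R0 (fun n => F n s) N) t (sum_f_R0 m N).
Proof.
  induction N as [|N IH]; intros H; simpl.
  - apply H; lia.
  - apply (dini_le_plus (fun s => sum_f_R0 (fun n => F n s) N) (F (S N))).
    + apply IH; intros n Hn; apply H; lia.
    + apply H; lia.
Qed.

Lemma derive_right_expansion (f : R -> R) (t l : R) : is_derive f t l ->
  forall eps, 0 < eps -> exists del, 0 < del /\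
    forall h, 0 < h < del -> Rabs (f (t + h) - f t - h * l) <= eps * h.
Proof.
  intros Hf eps Heps. apply is_derive_Reals in Hf.
  destruct (Hf eps Heps) as [del Hdel].
  exists (pos del); split; [apply cond_pos|]. intros h Hh.
  assert (Hh0 : h <> 0) by lra.
  assert (Hhdel : Rabs h < del) by (rewrite Rabs_right; lra).
  specialize (Hdel h Hh0 Hhdel).
  replace (f (t + h) - f t - h * l) with (h * ((f (t + h) - f t) / h - l))
    by (field; exact Hh0).
  rewrite Rabs_mult, (Rabs_right h) by lra. nra.
Qed.

Lemma dini_le_derive (f : R -> R) (t l : R) : is_derive f t l -> dini_le f t l.
Proof.
  intros Hf eps Heps.
  destruct (derive_right_expansion f t l Hf eps Heps) as [del [Hdel Hnear]].
  exists del; split; [exact Hdel|]. intros h Hh. specialize (Hnear h Hh).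
  pose proof (Rle_abs (f (t + h) - f t - h * l)). lra.
Qed.

Lemma abs_right_expansion (v l : R) : exists s, (s = 1 \/ s = -1) /\
  s * v = Rabs v /\ exists h0, 0 < h0 /\
    forall h, 0 < h < h0 -> Rabs (v + h * l) = Rabs v + h * (s * l).
Proof.
  destruct (Rtotal_order v 0) as [Hneg|[->|Hpos]].
  - exists (-1). split; [right; reflexivity|]. rewrite (Rabs_left v Hneg).
    split; [ring|]. exists (- v / (Rabs l + 1)).
    assert (Hl : 0 < Rabs l + 1) by (pose proof (Rabs_pos l); lra).
    split; [apply Rdiv_lt_0_compat; lra|]. intros h Hh.
    assert (Hsmall : h * (Rabs l + 1) < - v).
    { destruct Hh as [Hh0 Hh1]. apply (Rmult_lt_compat_r (Rabs l + 1)) in Hh1; [|lra].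
      unfold Rdiv in Hh1. rewrite Rmult_assoc, Rinv_l, Rmult_1_r in Hh1; lra. }
    pose proof (Rle_abs l). rewrite Rabs_left; nra.
  - destruct (Rle_dec 0 l) as [Hl|Hl].
    + exists 1. split; [left; reflexivity|]. rewrite Rabs_R0. split; [ring|].
      exists 1. split; [lra|]. intros h Hh. rewrite Rplus_0_l, Rabs_right; nra.
    + exists (-1). split; [right; reflexivity|]. rewrite Rabs_R0. split; [ring|].
      exists 1. split; [lra|]. intros h Hh. rewrite Rplus_0_l, Rabs_left; nra.
  - exists 1. split; [left; reflexivity|]. rewrite (Rabs_right v) by lra.
    split; [ring|]. exists (v / (Rabs l + 1)).
    assert (Hl : 0 < Rabs l + 1) by (pose proof (Rabs_pos l); lra).
    split; [apply Rdiv_lt_0_compat; lra|]. intros h Hh.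
    assert (Hsmall : h * (Rabs l + 1) < v).
    { destruct Hh as [Hh0 Hh1]. apply (Rmult_lt_compat_r (Rabs l + 1)) in Hh1; [|lra].
      unfold Rdiv in Hh1. rewrite Rmult_assoc, Rinv_l, Rmult_1_r in Hh1; lra. }
    pose proof (Rle_abs (- l)). rewrite Rabs_Ropp in *. rewrite Rabs_right; nra.
Qed.

Lemma dini_le_abs (f : R -> R) (t l : R) : is_derive f t l ->
  exists s, (s = 1 \/ s = -1) /\ s * f t = Rabs (f t) /\
    dini_le (fun u => Rabs (f u)) t (s * l).
Proof.
  intros Hf.
  destruct (abs_right_expansion (f t) l) as [s [Hs [Hsv [h0 [Hh0 Hexp]]]]].
  exists s. split; [exact Hs|]. split; [exact Hsv|].
  intros eps Heps.
  destruct (derive_right_expansion f t l Hf eps Heps) as [del [Hdel Hnear]].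
  exists (Rmin del h0); split; [apply Rmin_glb_lt; lra|]. intros h Hh.
  pose proof (Rmin_l del h0); pose proof (Rmin_r del h0).
  specialize (Hnear h ltac:(lra)). rewrite <- (Hexp h ltac:(lra)).
  replace (f (t + h)) with ((f (t + h) - f t - h * l) + (f t + h * l)) by ring.
  pose proof (Rabs_triang (f (t + h) - f t - h * l) (f t + h * l)). lra.
Qed.

Lemma dini_monotone (g : R -> R) (a b : R) : a < b ->
  filterlim g (at_right a) (locally (g a)) ->
  (forall t, a < t <= b -> continuous g t) ->
  (forall t, a < t < b -> dini_le g t 0) ->
  g b <= g a.
Proof.
  intros Hab Hright Hcont Hdini.
  apply Rle_plus_epsilon. intros eps Heps.
  set (e := eps / (b - a + 1)).
  assert (He : 0 < e) by (unfold e; apply Rdiv_lt_0_compat; lra).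
  assert (Hbound : forall t, a <= t -> t <= b -> g t <= g a + e * (t - a) + e).
  { apply (continuation a (fun t => t <= b -> g t <= g a + e * (t - a) + e)).
    - intros _. lra.
    - intros c Hac Hbelow Hcb.
      apply (continuous_le_from_left g c (c - a)); [lra|apply Hcont; lra|].
      intros y Hy. specialize (Hbelow y ltac:(lra) ltac:(lra)). nra.
    - intros c Hac Hc.
      destruct (Rle_dec b c) as [Hbc|Hcb].
      { exists 1. split; [lra|]. intros s Hs Hsb. lra. }
      destruct Hac as [Hac| <-].
      + destruct (Hdini c ltac:(lra) e He) as [del [Hdel Hnear]].
        exists del. split; [exact Hdel|]. intros s Hs _.
        specialize (Hnear (s - c) ltac:(lra)).
        replace (c + (s - c)) with s in Hnear by ring.
        specialize (Hc ltac:(lra)). nra.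
      + destruct (right_limit_eps g a (g a) Hright e He) as [del [Hdel Hnear]].
        exists del. split; [exact Hdel|]. intros s Hs _.
        specialize (Hnear s Hs). apply Rabs_def2 in Hnear. nra. }
  specialize (Hbound b ltac:(lra) ltac:(lra)).
  assert (Heps_split : e * (b - a) + e = eps) by (unfold e; field; lra).
  lra.
Qed.

Lemma dini_le_scale_exp (f : R -> R) (L t : R) : 0 <= f t ->
  dini_le f t (L * f t) -> dini_le (fun s => f s * exp (- L * s)) t 0.
Proof.
  intros Hpos Hf eps Heps.
  set (Q := exp (Rabs L * (Rabs t + 1))).
  assert (HQ : 0 < Q) by apply exp_pos.
  destruct (Hf (eps / Q) ltac:(apply Rdiv_lt_0_compat; lra)) as [del [Hdel Hnear]].
  exists (Rmin del 1); split; [apply Rmin_glb_lt; lra|].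
  intros h Hh. pose proof (Rmin_l del 1); pose proof (Rmin_r del 1).
  specialize (Hnear h ltac:(lra)).
  assert (Esplit : exp (- L * (t + h)) = exp (- L * t) * exp (- L * h))
    by (rewrite <- exp_plus; f_equal; ring).
  assert (Hdecay : (1 + h * L) * exp (- L * h) <= 1).
  { pose proof (exp_ineq1_le (h * L)).
    assert (exp (h * L) * exp (- L * h) = 1)
      by (rewrite <- exp_plus, <- exp_0; f_equal; ring).
    pose proof (exp_pos (- L * h)). nra. }
  assert (HexpQ : exp (- L * (t + h)) <= Q).
  { assert (Hexponent : - L * (t + h) <= Rabs L * (Rabs t + 1)).
    { pose proof (Rle_abs (- L * (t + h))) as Habs.
      rewrite Rabs_mult, Rabs_Ropp in Habs.
      pose proof (Rabs_pos L). pose proof (Rabs_triang t h).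
      rewrite (Rabs_right h) in * by lra. nra. }
    unfold Q. destruct Hexponent as [Hlt|Heq];
      [left; apply exp_increasing, Hlt|rewrite Heq; lra]. }
  pose proof (exp_pos (- L * (t + h))). pose proof (exp_pos (- L * t)).
  assert (A1 : f (t + h) * exp (- L * (t + h)) <=
               (f t + h * (L * f t) + eps / Q * h) * exp (- L * (t + h)))
    by (apply Rmult_le_compat_r; lra).
  assert (A2 : (f t + h * (L * f t)) * exp (- L * (t + h)) <= f t * exp (- L * t)).
  { rewrite Esplit.
    replace ((f t + h * (L * f t)) * (exp (- L * t) * exp (- L * h)))
      with ((f t * exp (- L * t)) * ((1 + h * L) * exp (- L * h))) by ring.
    assert (0 <= f t * exp (- L * t)) by nra. nra. }
  assert (A3 : eps / Q * h * exp (- L * (t + h)) <= eps * h).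
  { replace (eps * h) with (eps / Q * h * Q) by (field; lra).
    apply Rmult_le_compat_l; [|lra]. apply Rmult_le_pos; [|lra].
    left; apply Rdiv_lt_0_compat; lra. }
  nra.
Qed.

Lemma continuous_exp_linear (L t : R) : continuous (fun s => exp (- L * s)) t.
Proof.
  apply (ex_derive_continuous (K := R_AbsRing) (V := R_NormedModule)).
  auto_derive. exact I.
Qed.

Lemma dini_gronwall (f : R -> R) (L a b : R) : a < b ->
  filterlim f (at_right a) (locally (f a)) ->
  (forall t, a < t <= b -> continuous f t) ->
  (forall t, a < t < b -> 0 <= f t /\ dini_le f t (L * f t)) ->
  f b <= f a * exp (L * (b - a)).
Proof.
  intros Hab Hright Hcont Hdini.
  set (g := fun s => f s * exp (- L * s)).
  assert (Hg : g b <= g a).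
  { apply dini_monotone; [exact Hab| | |].
    - apply (filterlim_comp_2 (G := locally (f a)) (H := locally (exp (- L * a)))
               f (fun s => exp (- L * s)) Rmult); [exact Hright| |].
      + apply (filterlim_filter_le_1 _ (@filter_le_within _ (locally a) _ (fun u => a < u))).
        apply continuous_exp_linear.
      + apply (filterlim_mult (K := R_AbsRing)).
    - intros t Ht. apply (continuous_mult (K := R_AbsRing));
        [apply Hcont, Ht|apply continuous_exp_linear].
    - intros t Ht. destruct (Hdini t Ht) as [Hpos Hd].
      apply dini_le_scale_exp; assumption. }
  unfold g in Hg.
  assert (Hrescale : forall s, f s = f s * exp (- L * s) * exp (L * s)).
  { intros s. rewrite Rmult_assoc, <- exp_plus.
    replace (- L * s + L * s) with 0 by ring. rewrite exp_0. ring. }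
  rewrite (Hrescale b).
  replace (f a * exp (L * (b - a))) with (f a * exp (- L * a) * exp (L * b))
    by (rewrite !Rmult_assoc, <- exp_plus; do 2 f_equal; ring).
  apply Rmult_le_compat_r; [left; apply exp_pos|exact Hg].
Qed.

Lemma sum_term_le (F : nat -> R) (N k : nat) :
  (forall n, 0 <= F n) -> (k <= N)%nat -> F k <= sum_f_R0 F N.
Proof.
  intros Hpos. induction N as [|N IH]; intros Hk; simpl.
  - replace k with 0%nat by lia. lra.
  - pose proof (Hpos (S N)). destruct (Nat.eq_dec k (S N)) as [->|Hne].
    + pose proof (cond_pos_sum F N Hpos). lra.
    + specialize (IH ltac:(lia)). lra.
Qed.

Lemma sum_telescope_le (T B Y : nat -> R) (N : nat) :
  (forall n, (1 <= n <= N)%nat -> T n <= B (n - 1)%nat - B n - Y n) ->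
  sum_f_R0 T N <= T 0%nat + B 0%nat - B N - (sum_f_R0 Y N - Y 0%nat).
Proof.
  induction N as [|N IH]; intros H; simpl; [lra|].
  specialize (IH ltac:(intros n Hn; apply H; lia)).
  specialize (H (S N) ltac:(lia)). replace (S N - 1)%nat with N in H by lia. lra.
Qed.

Lemma l2_le_l1 (y : nat -> R) (N : nat) :
  sqrt (sum_f_R0 (fun n => y n ^ 2) N) <= sum_f_R0 (fun n => Rabs (y n)) N.
Proof.
  assert (Hsq : sum_f_R0 (fun n => y n ^ 2) N <= (sum_f_R0 (fun n => Rabs (y n)) N) ^ 2
                /\ 0 <= sum_f_R0 (fun n => Rabs (y n)) N).
  { induction N as [|N [IH1 IH2]]; cbn [sum_f_R0].
    - rewrite <- pow2_abs. split; [lra|apply Rabs_pos].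
    - pose proof (Rabs_pos (y (S N))). rewrite <- (pow2_abs (y (S N))). split; nra. }
  destruct Hsq as [Hsq Hpos].
  rewrite <- (sqrt_pow2 (sum_f_R0 (fun n => Rabs (y n)) N)) by exact Hpos.
  apply sqrt_le_1_alt, Hsq.
Qed.

Lemma l1_le_l2 (y : nat -> R) (N : nat) :
  sum_f_R0 (fun n => Rabs (y n)) N <=
  sqrt (INR (S N)) * sqrt (sum_f_R0 (fun n => y n ^ 2) N).
Proof.
  assert (Hcs : (sum_f_R0 (fun n => Rabs (y n)) N) ^ 2 <=
                  (INR N + 1) * sum_f_R0 (fun n => y n ^ 2) N
                /\ 0 <= sum_f_R0 (fun n => Rabs (y n)) N
                /\ 0 <= sum_f_R0 (fun n => y n ^ 2) N).
  { induction N as [|N [IH1 [IH2 IH3]]]; cbn [sum_f_R0].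
    - rewrite <- (pow2_abs (y 0%nat)). simpl INR.
      pose proof (Rabs_pos (y 0%nat)). split; [nra|split; nra].
    - set (A := sum_f_R0 (fun n => Rabs (y n)) N) in *.
      set (S2 := sum_f_R0 (fun n => y n ^ 2) N) in *.
      rewrite <- (pow2_abs (y (S N))).
      set (a := Rabs (y (S N))). assert (Ha : 0 <= a) by apply Rabs_pos.
      pose proof (pos_INR N). rewrite S_INR.
      assert (Hcross : 2 * A * a <= S2 + (INR N + 1) * a ^ 2).
      { apply Rmult_le_reg_r with (INR N + 1); [lra|].
        pose proof (pow2_ge_0 (A - (INR N + 1) * a)). nra. }
      split; [nra|split; nra]. }
  destruct Hcs as [Hcs [HA HS]].
  rewrite <- sqrt_mult by (try apply pos_INR; exact HS).
  rewrite <- (sqrt_pow2 (sum_f_R0 (fun n => Rabs (y n)) N)) by exact HA.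
  apply sqrt_le_1_alt. rewrite S_INR. exact Hcs.
Qed.

Lemma filterlim_sum_f_R0 {F : (R -> Prop) -> Prop} {FF : Filter F}
  (G : nat -> R -> R) (l : nat -> R) (N : nat) :
  (forall n, (n <= N)%nat -> filterlim (G n) F (locally (l n))) ->
  filterlim (fun s => sum_f_R0 (fun n => G n s) N) F (locally (sum_f_R0 l N)).
Proof.
  induction N as [|N IH]; intros H; simpl.
  - apply H; lia.
  - apply (filterlim_comp_2 (G := locally (sum_f_R0 l N)) (H := locally (l (S N)))
             _ (G (S N)) Rplus).
    + apply IH; intros n Hn; apply H; lia.
    + apply H; lia.
    + apply (filterlim_plus (V := R_NormedModule)).
Qed.

Lemma pow_abs_le (a M : R) (d : nat) : (1 <= d)%nat -> Rabs a <= M ->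
  Rabs (a ^ d) <= M ^ (d - 1) * Rabs a.
Proof.
  intros Hd Ha. destruct d as [|d]; [lia|].
  replace (S d - 1)%nat with d by lia.
  rewrite <- RPow_abs. simpl. rewrite Rmult_comm.
  apply Rmult_le_compat_r; [apply Rabs_pos|].
  apply pow_incr. split; [apply Rabs_pos|exact Ha].
Qed.

Lemma opp_pow_le_neg_part (a M : R) (d : nat) : (1 <= d)%nat -> Rabs a <= M ->
  - a ^ d <= M ^ (d - 1) * (Rabs a - a).
Proof.
  intros Hd Ha. pose proof (pow_abs_le a M d Hd Ha) as Hpow.
  assert (HM : 0 <= M ^ (d - 1)) by (apply pow_le; pose proof (Rabs_pos a); lra).
  destruct (Rle_dec 0 a) as [Hnn|Hneg].
  - rewrite Rabs_right by lra. replace (a - a) with 0 by ring.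
    pose proof (pow_le a d Hnn). lra.
  - assert (Habs : Rabs a = - a) by (apply Rabs_left; lra). rewrite Habs in *.
    pose proof (Rle_abs (- a ^ d)).
    rewrite Rabs_Ropp in *.
    assert (0 <= M ^ (d - 1) * - a) by (apply Rmult_le_pos; lra).
    replace (M ^ (d - 1) * (- a - a)) with (2 * (M ^ (d - 1) * - a)) by ring. lra.
Qed.

Lemma nonpos_pow_le_neg_part (a M : R) (d : nat) : (1 <= d)%nat -> Rabs a <= M ->
  a <= 0 -> a ^ d <= M ^ (d - 1) * (Rabs a - a).
Proof.
  intros Hd Ha Hneg. pose proof (pow_abs_le a M d Hd Ha) as Hpow.
  assert (HM : 0 <= M ^ (d - 1)) by (apply pow_le; pose proof (Rabs_pos a); lra).
  assert (Habs : Rabs a = - a) by (apply Rabs_left1; lra). rewrite Habs in *.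
  pose proof (Rle_abs (a ^ d)).
  assert (0 <= M ^ (d - 1) * - a) by (apply Rmult_le_pos; lra).
  replace (M ^ (d - 1) * (- a - a)) with (2 * (M ^ (d - 1) * - a)) by ring. lra.
Qed.

(* Growth rate of the negative part of the coordinate xn, whose velocity is
   sg (a^d - xn^d) - nn (xn - b): it is controlled by the negative parts of
   the neighbouring coordinates a, xn and b. *)
Lemma neg_part_rate_bound (s a xn b sg nn M : R) (d : nat) :
  (s = 1 \/ s = -1) -> s * xn = Rabs xn -> (1 <= d)%nat ->
  Rabs a <= M -> Rabs xn <= M -> 0 <= sg -> 0 <= nn ->
  s * (sg * (a ^ d - xn ^ d) - nn * (xn - b)) - (sg * (a ^ d - xn ^ d) - nn * (xn - b))
  <= 2 * (sg * M ^ (d - 1) * ((Rabs a - a) + (Rabs xn - xn)) + nn * (Rabs b - b)).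
Proof.
  intros [-> | ->] Hs Hd Ha Hxn Hsg Hnn;
    assert (HM : 0 <= M ^ (d - 1)) by (apply pow_le; pose proof (Rabs_pos a); lra);
    pose proof (Rle_abs a); pose proof (Rle_abs xn);
    pose proof (Rle_abs b); pose proof (Rle_abs (- b)); rewrite Rabs_Ropp in *.
  - assert (0 <= sg * M ^ (d - 1) * ((Rabs a - a) + (Rabs xn - xn)))
      by (apply Rmult_le_pos; [apply Rmult_le_pos|]; lra).
    assert (0 <= nn * (Rabs b - b)) by (apply Rmult_le_pos; lra).
    lra.
  - assert (Hxn0 : xn <= 0) by (pose proof (Rabs_pos xn); lra).
    pose proof (opp_pow_le_neg_part a M d Hd Ha).
    pose proof (nonpos_pow_le_neg_part xn M d Hd Hxn Hxn0).
    assert (nn * xn <= 0) by nra.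
    assert (- nn * b <= nn * (Rabs b - b)) by nra.
    assert (sg * (- a ^ d) <= sg * (M ^ (d - 1) * (Rabs a - a)))
      by (apply Rmult_le_compat_l; lra).
    assert (sg * xn ^ d <= sg * (M ^ (d - 1) * (Rabs xn - xn)))
      by (apply Rmult_le_compat_l; lra).
    nra.
Qed.

(* On nonnegative reals, t |-> t^d is nondecreasing, so a^d - b^d has the
   sign of a - b. *)
Lemma pow_diff_sign (s a b : R) (d : nat) : (s = 1 \/ s = -1) -> 0 <= a -> 0 <= b ->
  s * (a - b) = Rabs (a - b) -> s * (a ^ d - b ^ d) = Rabs (a ^ d - b ^ d).
Proof.
  intros [-> | ->] Ha Hb Hs; pose proof (Rabs_pos (a - b)).
  - pose proof (pow_incr b a d ltac:(lra)). rewrite Rabs_right; lra.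
  - pose proof (pow_incr a b d ltac:(lra)). rewrite Rabs_left1; lra.
Qed.

Lemma sign_mul_le_abs (s z : R) : (s = 1 \/ s = -1) -> s * z <= Rabs z.
Proof.
  intros [-> | ->]; [rewrite Rmult_1_l; apply Rle_abs|].
  pose proof (Rle_abs (- z)). rewrite Rabs_Ropp in *. lra.
Qed.

(* Rate of change of |E| for a coordinate gap E with velocity
   sg (Am - An) - nn (E - E1), when An has the sign s of E. *)
Lemma gap_rate_bound (s E E1 Am An sg nn : R) : (s = 1 \/ s = -1) ->
  s * E = Rabs E -> s * An = Rabs An -> 0 <= sg -> 0 <= nn ->
  s * (sg * (Am - An) - nn * (E - E1)) <=
  sg * Rabs Am - sg * Rabs An - nn * Rabs E + nn * Rabs E1.
Proof.
  intros Hs HE HA Hsg Hnn.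
  pose proof (sign_mul_le_abs s Am Hs). pose proof (sign_mul_le_abs s E1 Hs).
  assert (sg * (s * Am) <= sg * Rabs Am) by (apply Rmult_le_compat_l; lra).
  assert (nn * (s * E1) <= nn * Rabs E1) by (apply Rmult_le_compat_l; lra).
  replace (s * (sg * (Am - An) - nn * (E - E1))) with
    (sg * (s * Am) - sg * (s * An) - nn * (s * E) + nn * (s * E1)) by ring.
  rewrite HE, HA. lra.
Qed.

Lemma inU_nonneg (C : nat) (v : nat -> R) : inU C v ->
  forall n, (n <= C)%nat -> 0 <= v n.
Proof.
  intros [_ [Hmono HC]].
  assert (Hdown : forall k, (k <= C)%nat -> 0 <= v (C - k)%nat).
  { induction k as [|k IH]; intros Hk.
    - replace (C - 0)%nat with C by lia. exact HC.
    - specialize (IH ltac:(lia)). specialize (Hmono (C - S k)%nat ltac:(lia)).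
      replace (S (C - S k)) with (C - k)%nat in Hmono by lia. lra. }
  intros n Hn. replace n with (C - (C - n))%nat by lia. apply Hdown. lia.
Qed.

Lemma ext_le (C : nat) (v : nat -> R) (n : nat) : (n <= C)%nat -> ext C v n = v n.
Proof. intros H. unfold ext. apply Nat.leb_le in H. rewrite H. reflexivity. Qed.

Lemma ext_gt (C : nat) (v : nat -> R) (n : nat) : (C < n)%nat -> ext C v n = 0.
Proof.
  intros H. unfold ext. replace (Nat.leb n C) with false
    by (symmetry; apply Nat.leb_gt; exact H). reflexivity.
Qed.

Lemma continuous_abs_shift (c a : R) : continuous (fun y => Rabs (y - c)) a.
Proof.
  apply continuous_Rabs_comp.
  apply (continuous_minus (V := R_NormedModule) (fun y => y) (fun _ => c));
    [apply continuous_id|apply continuous_const].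
Qed.

Lemma continuous_neg_part (a : R) : continuous (fun y => Rabs y - y) a.
Proof.
  apply (continuous_minus (V := R_NormedModule) Rabs (fun y => y));
    [apply continuous_Rabs|apply continuous_id].
Qed.

Lemma is_derive_sub_const (f : R -> R) (t l c : R) :
  is_derive f t l -> is_derive (fun s => f s - c) t l.
Proof.
  intros Hf.
  pose proof (is_derive_minus f (fun _ => c) t l 0 Hf (is_derive_const c t)) as H.
  replace l with (minus l 0) by (unfold minus, plus, opp; simpl; ring). exact H.
Qed.

Section Flow.

Variables (C d : nat) (sigma : R) (pi u : nat -> R) (x : R -> nat -> R).
Hypothesis Hd : (1 <= d)%nat.
Hypothesis Hsigma : 0 < sigma.
Hypothesis Hpi : inU C pi.
Hypothesis Hfix : is_fixed_point C d sigma pi.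
Hypothesis Hu : inU C u.
Hypothesis Hsol : is_solution C d sigma u x.

Definition velocity (t : R) (n : nat) : R :=
  if Nat.eqb n 0 then 0 else rhs C d sigma (x t) n.

Lemma coord_derive (t : R) (n : nat) : 0 < t -> (n <= C)%nat ->
  is_derive (fun s => x s n) t (velocity t n).
Proof.
  destruct Hsol as (_ & _ & Hder0 & Hder). intros Ht Hn. unfold velocity.
  destruct (Nat.eqb_spec n 0) as [->|Hne]; [apply Hder0, Ht|apply Hder; [exact Ht|lia]].
Qed.

Lemma coord_continuous (t : R) (n : nat) : 0 < t -> (n <= C)%nat ->
  continuous (fun s => x s n) t.
Proof.
  intros Ht Hn. apply (ex_derive_continuous (K := R_AbsRing) (V := R_NormedModule)).
  eexists. apply coord_derive; assumption.
Qed.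

Lemma coord_right_continuous (t : R) (n : nat) : 0 <= t -> (n <= C)%nat ->
  filterlim (fun s => x s n) (at_right t) (locally (x t n)).
Proof.
  destruct Hsol as (Hinit & Hright & _). intros Ht Hn.
  destruct Ht as [Ht| <-].
  - apply (filterlim_filter_le_1 _ (@filter_le_within _ (locally t) _ (fun s => t < s))).
    apply coord_continuous; assumption.
  - rewrite Hinit by exact Hn. apply Hright, Hn.
Qed.

Lemma functional_continuous (phi : nat -> R -> R) (N : nat) (t : R) :
  (N <= C)%nat -> (forall n a, continuous (phi n) a) -> 0 < t ->
  continuous (fun s => sum_f_R0 (fun n => phi n (x s n)) N) t.
Proof.
  intros HN Hphi Ht. apply (filterlim_sum_f_R0 (fun n s => phi n (x s n))).
  intros n Hn. apply (filterlim_comp _ _ _ (fun s => x s n) (phi n) _ (locally (x t n)));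
    [apply coord_continuous; [exact Ht|lia]|apply Hphi].
Qed.

Lemma functional_right_continuous (phi : nat -> R -> R) (N : nat) (t : R) :
  (N <= C)%nat -> (forall n a, continuous (phi n) a) -> 0 <= t ->
  filterlim (fun s => sum_f_R0 (fun n => phi n (x s n)) N) (at_right t)
    (locally (sum_f_R0 (fun n => phi n (x t n)) N)).
Proof.
  intros HN Hphi Ht. apply (filterlim_sum_f_R0 (fun n s => phi n (x s n))).
  intros n Hn. apply (filterlim_comp _ _ _ (fun s => x s n) (phi n) _ (locally (x t n)));
    [apply coord_right_continuous; [exact Ht|lia]|apply Hphi].
Qed.

(* The frozen coordinate stays equal to 1: |x_0 - 1| has zero Dini derivative. *)
Lemma first_coord_one (t : R) : 0 <= t -> x t 0%nat = 1.
Proof.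
  assert (Hstart : x 0 0%nat = 1).
  { destruct Hsol as (Hinit & _). rewrite Hinit by lia. apply Hu. }
  intros [Ht| <-]; [|exact Hstart].
  set (phi := fun (_ : nat) y => Rabs (y - 1)).
  assert (Hphi : forall n a, continuous (phi n) a) by (intros; apply continuous_abs_shift).
  assert (Hdrift : Rabs (x t 0%nat - 1) <= Rabs (x 0 0%nat - 1)).
  { apply (dini_monotone (fun s => sum_f_R0 (fun n => phi n (x s n)) 0)); [exact Ht| | |].
    - apply functional_right_continuous; [lia|exact Hphi|lra].
    - intros s Hs. apply functional_continuous; [lia|exact Hphi|lra].
    - intros s Hs.
      pose proof (coord_derive s 0 ltac:(lra) ltac:(lia)) as Hder.
      apply (is_derive_sub_const _ _ _ 1) in Hder.
      destruct (dini_le_abs _ _ _ Hder) as [sg [_ [_ Hdini]]].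
      rewrite Rmult_0_r in Hdini. exact Hdini. }
  rewrite Hstart, Rminus_eq_0, Rabs_R0 in Hdrift.
  pose proof (Rabs_pos (x t 0%nat - 1)).
  assert (Hzero : Rabs (x t 0%nat - 1) = 0) by lra.
  apply Rabs_eq_0 in Hzero. lra.
Qed.


Definition neg_mass (s : R) : R := sum_f_R0 (fun n => Rabs (x s n) - x s n) C.

Lemma neg_part_nonneg (a : R) : 0 <= Rabs a - a.
Proof. pose proof (Rle_abs a). lra. Qed.

Lemma neg_mass_nonneg (s : R) : 0 <= neg_mass s.
Proof. apply cond_pos_sum. intros n. apply neg_part_nonneg. Qed.

Lemma ext_neg_part_le (s : R) (k : nat) :
  Rabs (ext C (x s) k) - ext C (x s) k <= neg_mass s.
Proof.
  destruct (Nat.le_gt_cases k C) as [Hk|Hk].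
  - rewrite ext_le by exact Hk.
    apply (sum_term_le (fun n => Rabs (x s n) - x s n)); [|exact Hk].
    intros n. apply neg_part_nonneg.
  - rewrite ext_gt by exact Hk. rewrite Rabs_R0. pose proof (neg_mass_nonneg s). lra.
Qed.

Lemma neg_mass_start : neg_mass 0 = 0.
Proof.
  destruct Hsol as (Hinit & _). unfold neg_mass.
  rewrite (sum_eq _ (fun _ => 0)), sum_cte; [ring|].
  intros n Hn. rewrite Hinit by exact Hn.
  rewrite Rabs_right; [ring|]. apply Rle_ge, (inU_nonneg C u Hu n Hn).
Qed.

Lemma local_bound (tau : R) : 0 <= tau -> exists eta M, 0 < eta /\
  forall s, tau < s < tau + eta -> forall n, (n <= C)%nat -> Rabs (x s n) <= M.
Proof.
  intros Htau.
  set (size := fun s => sum_f_R0 (fun n => Rabs (x s n)) C).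
  assert (Hlim : filterlim size (at_right tau) (locally (size tau))).
  { apply (functional_right_continuous (fun _ => Rabs)); [lia| |exact Htau].
    intros _ a. apply continuous_Rabs. }
  destruct (right_limit_eps size tau (size tau) Hlim 1 ltac:(lra)) as [eta [Heta Hnear]].
  exists eta, (size tau + 1). split; [exact Heta|]. intros s Hs n Hn.
  specialize (Hnear s Hs). apply Rabs_def2 in Hnear.
  pose proof (sum_term_le (fun n => Rabs (x s n)) C n (fun n => Rabs_pos _) Hn).
  unfold size in *. lra.
Qed.

Lemma neg_mass_dini (t M : R) : 0 < t -> (forall n, (n <= C)%nat -> Rabs (x t n) <= M) ->
  dini_le neg_mass t (INR (S C) * ((4 * sigma * M ^ (d - 1) + 2 * INR C) * neg_mass t)).
Proof.
  intros Ht HM.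
  assert (HM0 : 0 <= M)
    by (pose proof (HM 0%nat ltac:(lia)); pose proof (Rabs_pos (x t 0%nat)); lra).
  assert (HMd : 0 <= M ^ (d - 1)) by (apply pow_le; exact HM0).
  set (K := (4 * sigma * M ^ (d - 1) + 2 * INR C) * neg_mass t).
  rewrite Rmult_comm, <- sum_cte.
  apply (dini_le_sum (fun n s => Rabs (x s n) - x s n)). intros n Hn.
  pose proof (coord_derive t n Ht Hn) as Hder.
  destruct (dini_le_abs _ _ _ Hder) as [sg [Hsg [Hsx Habs]]].
  apply (dini_le_weaken _ _ (sg * velocity t n + - velocity t n)).
  { apply (dini_le_plus (fun r => Rabs (x r n)) (fun r => - x r n)); [exact Habs|].
    apply dini_le_derive, (is_derive_opp (fun r => x r n)), Hder. }
  assert (HK : 0 <= K).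
  { apply Rmult_le_pos; [|apply neg_mass_nonneg]. pose proof (pos_INR C). nra. }
  unfold velocity. destruct (Nat.eqb_spec n 0) as [->|Hne]; [lra|].
  unfold rhs. rewrite (ext_le C (x t) n) by exact Hn.
  assert (Hprev : Rabs (ext C (x t) (n - 1)) <= M) by (rewrite ext_le by lia; apply HM; lia).
  pose proof (neg_part_rate_bound sg (ext C (x t) (n - 1)) (x t n) (ext C (x t) (S n))
                sigma (INR n) M d Hsg Hsx Hd Hprev (HM n Hn) ltac:(lra) (pos_INR n)) as Hrate.
  pose proof (ext_neg_part_le t (n - 1)). pose proof (ext_neg_part_le t (S n)).
  pose proof (ext_neg_part_le t n) as Hcur. rewrite ext_le in Hcur by exact Hn.
  pose proof (neg_part_nonneg (ext C (x t) (S n))).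
  assert (INR n * (Rabs (ext C (x t) (S n)) - ext C (x t) (S n)) <= INR C * neg_mass t)
    by (apply Rmult_le_compat; [apply pos_INR|lra|apply le_INR, Hn|lra]).
  assert (sigma * M ^ (d - 1) * (Rabs (ext C (x t) (n - 1)) - ext C (x t) (n - 1) +
            (Rabs (x t n) - x t n)) <= sigma * M ^ (d - 1) * (2 * neg_mass t))
    by (apply Rmult_le_compat_l; [apply Rmult_le_pos|]; lra).
  unfold K. lra.
Qed.

(* The negative mass stays zero: locally Gronwall, globally by continuation. *)
Lemma neg_mass_vanishes (s : R) : 0 <= s -> neg_mass s <= 0.
Proof.
  assert (Hphi : forall (n : nat) a, continuous (fun y => Rabs y - y) a)
    by (intros; apply continuous_neg_part).
  revert s. apply (continuation 0 (fun s => neg_mass s <= 0)).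
  - rewrite neg_mass_start. lra.
  - intros c Hc Hbelow. apply (continuous_le_from_left _ c c); [exact Hc| |].
    + apply (functional_continuous (fun _ y => Rabs y - y)); [lia|exact Hphi|exact Hc].
    + intros y Hy. apply Hbelow. lra.
  - intros c Hc Hzero. destruct (local_bound c Hc) as [eta [M [Heta Hbound]]].
    exists eta. split; [exact Heta|]. intros r Hr.
    set (L := INR (S C) * (4 * sigma * M ^ (d - 1) + 2 * INR C)).
    assert (Hgr : neg_mass r <= neg_mass c * exp (L * (r - c))).
    { apply dini_gronwall; [lra| | |].
      - apply (functional_right_continuous (fun _ y => Rabs y - y)); [lia|exact Hphi|exact Hc].
      - intros y Hy. apply (functional_continuous (fun _ a => Rabs a - a)); [lia|exact Hphi|lra].
      - intros y Hy. split; [apply neg_mass_nonneg|].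
        unfold L. rewrite Rmult_assoc. apply neg_mass_dini; [lra|]. apply Hbound. lra. }
    pose proof (exp_pos (L * (r - c))). pose proof (neg_mass_nonneg c). nra.
Qed.

Lemma coord_nonneg (s : R) (n : nat) : 0 <= s -> (n <= C)%nat -> 0 <= x s n.
Proof.
  intros Hs Hn. pose proof (neg_mass_vanishes s Hs) as Hzero.
  pose proof (sum_term_le (fun n => Rabs (x s n) - x s n) C n
                (fun n => neg_part_nonneg _) Hn) as Hterm.
  fold (neg_mass s) in Hterm. simpl in Hterm.
  destruct (Rle_dec 0 (x s n)) as [ok|Hneg]; [exact ok|].
  rewrite Rabs_left in Hterm; lra.
Qed.


Definition gap (s : R) : R := sum_f_R0 (fun n => Rabs (x s n - pi n)) C.

(* Coordinate differences to the fixed point (padded with 0 beyond C), and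
   the flux sigma |x_k^d - pi_k^d| - k |x_{k+1} - pi_{k+1}| through which
   the rates of consecutive coordinates of the gap telescope. *)
Definition coord_gap (t : R) (k : nat) : R := ext C (x t) k - ext C pi k.
Definition pow_gap (t : R) (k : nat) : R := ext C (x t) k ^ d - ext C pi k ^ d.
Definition gap_flux (t : R) (k : nat) : R :=
  sigma * Rabs (pow_gap t k) - INR k * Rabs (coord_gap t (S k)).

(* Rate of |x_n - pi_n| for 1 <= n <= C: the fixed-point equation removes
   pi from the velocity, and x_n^d - pi_n^d has the sign of x_n - pi_n. *)
Lemma gap_term_dini (t : R) (n : nat) : 0 < t -> (1 <= n <= C)%nat ->
  dini_le (fun s => Rabs (x s n - pi n)) t
    (gap_flux t (n - 1) - gap_flux t n - Rabs (coord_gap t n)).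
Proof.
  intros Ht Hn.
  pose proof (is_derive_sub_const _ _ _ (pi n) (coord_derive t n Ht ltac:(lia))) as Hder.
  destruct (dini_le_abs _ _ _ Hder) as [sg [Hsg [HsE Habs]]].
  apply (dini_le_weaken _ _ _ _ Habs). unfold velocity.
  destruct (Nat.eqb_spec n 0) as [->|Hne]; [lia|].
  assert (Hvel : rhs C d sigma (x t) n = sigma * (pow_gap t (n - 1)%nat - pow_gap t n)
                   - INR n * (coord_gap t n - coord_gap t (S n))).
  { rewrite <- (Rminus_0_r (rhs C d sigma (x t) n)).
    rewrite <- (proj2 Hfix n Hn). unfold rhs, pow_gap, coord_gap. ring. }
  assert (HE : coord_gap t n = x t n - pi n)
    by (unfold coord_gap; rewrite !ext_le by lia; reflexivity).
  rewrite <- HE in HsE.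
  assert (HsA : sg * pow_gap t n = Rabs (pow_gap t n)).
  { unfold pow_gap. rewrite !ext_le by lia. apply pow_diff_sign; [exact Hsg| | |].
    - apply coord_nonneg; [lra|lia].
    - apply (inU_nonneg C pi Hpi n ltac:(lia)).
    - rewrite <- HE. exact HsE. }
  rewrite Hvel.
  pose proof (gap_rate_bound sg (coord_gap t n) (coord_gap t (S n)) (pow_gap t (n - 1)%nat)
                (pow_gap t n) sigma (INR n) Hsg HsE HsA ltac:(lra) (pos_INR n)).
  unfold gap_flux. replace (S (n - 1)) with n by lia.
  rewrite minus_INR by lia. simpl INR. lra.
Qed.

(* L1 contraction: D+ gap <= - gap. The terms telescope to
   flux 0 - flux C - gap, where flux 0 = 0 since x_0 = pi_0 = 1, and
   flux C >= 0 since the padded coordinate C + 1 vanishes. *)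
Lemma gap_dini (t : R) : 0 < t -> dini_le gap t (-1 * gap t).
Proof.
  intros Ht.
  set (K := fun k => if Nat.eqb k 0 then 0
                     else gap_flux t (k - 1) - gap_flux t k - Rabs (coord_gap t k)).
  assert (Hx0 : x t 0%nat = 1) by (apply first_coord_one; lra).
  assert (Hpi0 : pi 0%nat = 1) by apply Hpi.
  apply (dini_le_weaken _ _ (sum_f_R0 K C)).
  { apply (dini_le_sum (fun n s => Rabs (x s n - pi n))). intros n Hn.
    unfold K. destruct (Nat.eqb_spec n 0) as [->|Hne].
    - pose proof (is_derive_sub_const _ _ _ (pi 0%nat) (coord_derive t 0 Ht Hn)) as Hder.
      destruct (dini_le_abs _ _ _ Hder) as [sg [_ [_ Habs]]].
      unfold velocity in Habs. simpl in Habs. rewrite Rmult_0_r in Habs. exact Habs.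
    - apply gap_term_dini; [exact Ht|lia]. }
  pose proof (sum_telescope_le K (gap_flux t) (fun k => Rabs (coord_gap t k)) C) as Htel.
  assert (Hflux0 : gap_flux t 0%nat = 0).
  { unfold gap_flux, pow_gap. rewrite !ext_le by lia.
    rewrite Hx0, Hpi0, Rminus_eq_0, Rabs_R0. simpl INR. ring. }
  assert (HfluxC : 0 <= gap_flux t C).
  { unfold gap_flux, coord_gap. rewrite !ext_gt by lia. rewrite Rminus_eq_0, Rabs_R0.
    pose proof (Rabs_pos (pow_gap t C)). nra. }
  assert (Hcoord0 : Rabs (coord_gap t 0%nat) = 0).
  { unfold coord_gap. rewrite !ext_le by lia. rewrite Hx0, Hpi0, Rminus_eq_0. apply Rabs_R0. }
  assert (Hsum : sum_f_R0 (fun k => Rabs (coord_gap t k)) C = gap t).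
  { apply sum_eq. intros n Hn. unfold coord_gap. rewrite !ext_le by exact Hn. reflexivity. }
  assert (Hstep : forall n, (1 <= n <= C)%nat ->
            K n <= gap_flux t (n - 1) - gap_flux t n - Rabs (coord_gap t n)).
  { intros n Hn. unfold K. destruct (Nat.eqb_spec n 0); [lia|lra]. }
  specialize (Htel Hstep). assert (HK0 : K 0%nat = 0) by reflexivity. lra.
Qed.
Lemma gap_decay (t : R) : 0 <= t -> gap t <= gap 0 * exp (-1 * t).
Proof.
  intros [Ht| <-]; [|rewrite Rmult_0_r, exp_0; lra].
  replace (-1 * t) with (-1 * (t - 0)) by ring.
  apply dini_gronwall; [exact Ht| | |].
  - apply (functional_right_continuous (fun n y => Rabs (y - pi n))); [lia| |lra].
    intros n a. apply continuous_abs_shift.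
  - intros s Hs. apply (functional_continuous (fun n y => Rabs (y - pi n))); [lia| |lra].
    intros n a. apply continuous_abs_shift.
  - intros s Hs. split; [apply cond_pos_sum; intros n; apply Rabs_pos|].
    apply gap_dini. lra.
Qed.

End Flow.

Theorem mainTheorem4 (C d : nat) (sigma : R) (pi : nat -> R) :
  (1 <= C)%nat -> (1 <= d)%nat -> 0 < sigma ->
  inU C pi -> is_fixed_point C d sigma pi ->
  exists delta1 D3 : R, 0 < delta1 /\
    forall (u : nat -> R) (x : R -> nat -> R),
      inU C u -> is_solution C d sigma u x ->
      forall t : R, 0 <= t ->
        dist2 C (x t) pi <= D3 * exp (- delta1 * t) * dist2 C u pi.
Proof.
  intros _ Hd Hsigma Hpi Hfix. exists 1, (sqrt (INR (S C))). split; [lra|].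
  intros u x Hu Hsol t Ht.
  assert (Hl2 : dist2 C (x t) pi <= gap C pi x t)
    by apply (l2_le_l1 (fun n => x t n - pi n)).
  pose proof (gap_decay C d sigma pi u x Hd Hsigma Hpi Hfix Hu Hsol t Ht) as Hdecay.
  assert (Hstart : gap C pi x 0 <= sqrt (INR (S C)) * dist2 C u pi).
  { unfold gap, dist2. destruct Hsol as [Hinit _].
    rewrite (sum_eq _ (fun n => Rabs (u n - pi n)))
      by (intros n Hn; rewrite Hinit by exact Hn; reflexivity).
    apply (l1_le_l2 (fun n => u n - pi n)). }
  pose proof (exp_pos (-1 * t)).
  replace (- (1) * t) with (-1 * t) by ring. nra.
Qed.
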